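(* Let $\mathcal M$ be a finite polyptych lattice over $F$, $(\mathcal M,\mathcal N,\mathsf v,\mathsf w)$ a strict dual $F$-pair, and $\mathcal P\subseteq\mathcal M_{\mathbb R}$ a PL polytope over $F$. Then the support function satisfies $\psi_{\mathcal P}(n)=\min_{s\in V(\mathcal P)}\mathsf v(s)(n)$ for all $n\in\mathcal N_{\mathbb R}$, where $V(\mathcal P)$ is a finite set. In particular $\psi_{\mathcal P}$ is continuous and belongs to the point semialgebra $P_{\mathcal N_{\mathbb R}}$.
   Context: Fix a subring $F$ with $\mathbb Z\subseteq F\subseteq\mathbb R$. A polyptych lattice of rank $r$ over $F$ is a collection $\{M_\alpha\}_{\alpha\in I}$ of free $F$-modules of rank $r$ with piecewise $F$-linear maps (continuous and $F$-linear on each cone of some complete $F$-rational fan) $\mu_{\alpha,\beta}:M_\alpha\to M_\beta$ with $\mu_{\alpha,\alpha}=\mathrm{id}$, $\mu_{\alpha,\beta}=\mu_{\beta,\alpha}^{-1}$, $\mu_{\beta,\gamma}\circ\mu_{\alpha,\beta}=\mu_{\alpha,\gamma}$; finite if $I$ is finite. Elements are classes of $\bigsqcup M_\alpha$ under $m_\alpha\sim\mu_{\alpha,\beta}(m_\alpha)$; $\pi_\alpha$ chart maps; $\mathcal M_{\mathbb R}$ has charts $M_\alpha\otimes\mathbb R$. $m+_\alpha m':=\pi_\alpha^{-1}(\pi_\alpha(m)+\pi_\alpha(m'))$, $\lambda m:=\pi_\alpha^{-1}(\lambda\pi_\alpha(m))$. $\Sigma(\mathcal M)$: coarsest complete fan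 of cones in $\mathcal M_{\mathbb R}$ on whose chart images all mutations are linear. Points of $\mathcal M$ (resp. $\mathcal M_{\mathbb R}$): $p$ with $p(m)+p(m')=\min_\alpha p(m+_\alpha m')$ and $p(\lambda m)=\lambda p(m)$ for nonnegative scalars; sets $\mathrm{Sp}(\mathcal M)$, $\mathrm{Sp}_{\mathbb R}(\mathcal M)$; $\mathrm{Sp}_{\mathbb R}(\mathcal M,\alpha)$ = those linear on chart $\alpha$. $\mathcal H_{p,a}=\{m\in\mathcal M_{\mathbb R}:p(m)\ge a\}$. A PL polytope over $F$: compact $\bigcap_{i=1}^\ell\mathcal H_{p_i,a_i}$, $p_i\in\mathrm{Sp}(\mathcal M)$, $a_i\in F$; $V(\mathcal P)=\{m:\exists\alpha,\ \pi_\alpha(m)\text{ a vertex of the polytope }\pi_\alpha(\mathcal P)\}$. Strict dual $F$-pair: $\mathsf v:\mathcal M_{\mathbb R}\to\mathrm{Sp}_{\mathbb R}(\mathcal N)$, $\mathsf w:\mathcal N_{\mathbb R}\to\mathrm{Sp}_{\mathbb R}(\mathcal M)$ such that (1) $\mathsf v(\mathcal M)\subseteq\mathrm{Sp}(\mathcal N)$, $\mathsf w(\mathcal N)\subseteq\mathrm{Sp}(\mathcal M)$; (2) $\mathsf v(m)(n)=\mathsf w(n)(m)$; (3) these restrictions are bijections; (4) the $\mathsf v^{-1}(\mathrm{Sp}_{\mathbb R}(\mathcal N,\gamma))$ are exactly the maximal cones of $\Sigma(\mathcal M)$ and the $\mathsf w^{-1}(\mathrm{Sp}_{\mathbb R}(\mathcal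 M,\alpha))$ those of $\Sigma(\mathcal N)$. Support function: $\psi_{\mathcal P}(n)=\min\{\mathsf v(u)(n):u\in\mathcal P\}$ for $n\in\mathcal N_{\mathbb R}$. $P_{\mathcal N_{\mathbb R}}$ is the set of functions on $\mathcal N_{\mathbb R}$ generated by $\mathrm{Sp}_{\mathbb R}(\mathcal N)$ under pointwise $\min$ and $+$. *)

From HB Require Import structures.
From mathcomp Require Import all_boot all_order all_algebra.
From mathcomp Require Import all_classical all_reals all_analysis.
From mathcomp Require Import Rstruct Rstruct_topology.
From Stdlib Require List.
Set Implicit Arguments. Unset Strict Implicit. Unset Printing Implicit Defensive.
Import Order.TTheory GRing.Theory Num.Theory.
Local Open Scope classical_set_scope.
Local Open Scope ring_scope.

Notation RR := Rdefinitions.R.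

Definition subringR (F : set RR) : Prop :=
  (forall z : int, F (z%:~R)) /\
  (forall x y, F x -> F y -> F (x + y) /\ F (x * y) /\ F (- x)).

Definition inFv (F : set RR) (r : nat) (x : 'rV[RR]_r) : Prop := forall i, F (x 0 i).
Definition inFm (F : set RR) (r s : nat) (A : 'M[RR]_(r, s)) : Prop :=
  forall i j, F (A i j).

Definition dotv (r : nat) (u x : 'rV[RR]_r) : RR := \sum_(i < r) u 0 i * x 0 i.

Definition cone_gen (r : nat) (gs : seq 'rV[RR]_r) (x : 'rV[RR]_r) : Prop :=
  exists lam : 'I_(size gs) -> RR,
    (forall i, 0 <= lam i) /\ x = \sum_(i < size gs) lam i *: nth 0 gs i.

Definition rcone (F : set RR) (r : nat) (C : set 'rV[RR]_r) : Prop :=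
  exists gs : seq 'rV[RR]_r, (forall g, List.In g gs -> inFv F g) /\
    (forall x, C x <-> cone_gen gs x).

Definition eqset (T : Type) (A B : set T) : Prop := forall x, A x <-> B x.

Definition is_face (r : nat) (C D : set 'rV[RR]_r) : Prop :=
  exists u : 'rV[RR]_r, (forall x, C x -> 0 <= dotv u x) /\
    (forall x, D x <-> (C x /\ dotv u x = 0)).

Definition fan (F : set RR) (r : nat) (L : seq (set 'rV[RR]_r)) : Prop :=
  (forall C, List.In C L -> rcone F C) /\
  (forall C D, List.In C L -> is_face C D -> exists D', List.In D' L /\ eqset D D') /\
  (forall C C', List.In C L -> List.In C' L ->
     is_face C (C `&` C') /\ is_face C' (C `&` C')).

Definition complete_fan (F : set RR) (r : nat) (L : seq (set 'rV[RR]_r)) : Prop :=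
  fan F L /\ (forall x, exists C, List.In C L /\ C x).

Definition pwl (F : set RR) (r s : nat) (f : 'rV[RR]_r -> 'rV[RR]_s) : Prop :=
  continuous f /\
  exists L, complete_fan F L /\
    forall C, List.In C L -> exists A : 'M[RR]_(r, s), inFm F A /\
      forall x, C x -> f x = x *m A.

(* A polyptych lattice of rank r over F with index type I: the charts are
   M_alpha = F^r (inside M_alpha ⊗ R = R^r) and mu a b is the (real extension
   of the) mutation mu_{a,b}. *)
Definition polyptych (F : set RR) (I : Type) (r : nat)
    (mu : I -> I -> 'rV[RR]_r -> 'rV[RR]_r) : Prop :=
  inhabited I /\
  (forall a b, pwl F (mu a b)) /\
  (forall a x, mu a a x = x) /\
  (forall a b x, mu b a (mu a b x) = x /\ mu a b (mu b a x) = x) /\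
  (forall a b c x, mu b c (mu a b x) = mu a c x).

Section PL.
Variables (F : set RR) (I : Type) (r : nat) (mu : I -> I -> 'rV[RR]_r -> 'rV[RR]_r).

(* elements of M_R: compatible families of chart coordinates *)
Definition isMR (m : I -> 'rV[RR]_r) : Prop := forall a b, m b = mu a b (m a).
(* elements of M: classes of elements of some M_alpha = F^r *)
Definition isM (m : I -> 'rV[RR]_r) : Prop := isMR m /\ exists a, inFv F (m a).
Definition piinv (a : I) (x : 'rV[RR]_r) : I -> 'rV[RR]_r := fun b => mu a b x.
Definition addc (a : I) (m m' : I -> 'rV[RR]_r) := piinv a (m a + m' a).
Definition smulc (a : I) (l : RR) (m : I -> 'rV[RR]_r) := piinv a (l *: m a).

Definition SpR (p : (I -> 'rV[RR]_r) -> RR) : Prop :=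
  (forall m m', isMR m -> isMR m' ->
     (forall a, p m + p m' <= p (addc a m m')) /\
     (exists a, p m + p m' = p (addc a m m'))) /\
  (forall a l m, 0 <= l -> isMR m -> p (smulc a l m) = l * p m).
Definition Sp (p : (I -> 'rV[RR]_r) -> RR) : Prop :=
  SpR p /\ forall m, isM m -> F (p m).
Definition SpRa (a : I) (p : (I -> 'rV[RR]_r) -> RR) : Prop :=
  SpR p /\ exists u : 'rV[RR]_r, forall x, p (piinv a x) = dotv u x.

Definition subM (A B : set (I -> 'rV[RR]_r)) := forall m, isMR m -> A m -> B m.
Definition eqM (A B : set (I -> 'rV[RR]_r)) := subM A B /\ subM B A.

Definition chart_fan (S : seq (set (I -> 'rV[RR]_r))) : Prop :=
  (forall a, complete_fan F (map (fun C => fun x => C (piinv a x)) S)) /\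
  (forall C a b, List.In C S -> exists A : 'M[RR]_(r, r),
      forall x, C (piinv a x) -> mu a b x = x *m A).
Definition coarsest_fan (S : seq (set (I -> 'rV[RR]_r))) : Prop :=
  chart_fan S /\ forall S', chart_fan S' ->
    forall C', List.In C' S' -> exists C, List.In C S /\ subM C' C.
Definition maxcone (S : seq (set (I -> 'rV[RR]_r))) (C : set (I -> 'rV[RR]_r)) :=
  List.In C S /\ forall C', List.In C' S -> subM C C' -> subM C' C.

Definition PLpolytope (P : set (I -> 'rV[RR]_r)) : Prop :=
  (exists (l : nat) (p : 'I_l -> (I -> 'rV[RR]_r) -> RR) (c : 'I_l -> RR),
     (forall i, Sp (p i)) /\ (forall i, F (c i)) /\
     (forall m, P m <-> (isMR m /\ forall i, c i <= p i m))) /\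
  (forall a, compact [set x | P (piinv a x)]).

Definition vertex (K : set 'rV[RR]_r) (x : 'rV[RR]_r) : Prop :=
  K x /\ exists u : 'rV[RR]_r, forall y, K y -> y <> x -> dotv u x < dotv u y.

Definition Vert (P : set (I -> 'rV[RR]_r)) (m : I -> 'rV[RR]_r) : Prop :=
  P m /\ exists a, vertex [set x | P (piinv a x)] (m a).

End PL.

Definition strict_dual_pair (F : set RR) (I J : Type) (r s : nat)
    (mu : I -> I -> 'rV[RR]_r -> 'rV[RR]_r) (nu : J -> J -> 'rV[RR]_s -> 'rV[RR]_s)
    (v : (I -> 'rV[RR]_r) -> (J -> 'rV[RR]_s) -> RR)
    (w : (J -> 'rV[RR]_s) -> (I -> 'rV[RR]_r) -> RR) : Prop :=
  (forall m, isMR mu m -> SpR nu (v m)) /\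
  (forall n, isMR nu n -> SpR mu (w n)) /\
  (forall m, isM F mu m -> Sp F nu (v m)) /\
  (forall n, isM F nu n -> Sp F mu (w n)) /\
  (forall m n, isMR mu m -> isMR nu n -> v m n = w n m) /\
  (forall m m', isM F mu m -> isM F mu m' ->
     (forall n, isMR nu n -> v m n = v m' n) -> m = m') /\
  (forall p, Sp F nu p -> exists m, isM F mu m /\ forall n, isMR nu n -> v m n = p n) /\
  (forall n n', isM F nu n -> isM F nu n' ->
     (forall m, isMR mu m -> w n m = w n' m) -> n = n') /\
  (forall p, Sp F mu p -> exists n, isM F nu n /\ forall m, isMR mu m -> w n m = p m) /\
  (exists S, coarsest_fan F mu S /\
     (forall g, exists C, maxcone mu S C /\
        eqM mu (fun m => SpRa nu g (v m)) C) /\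
     (forall C, maxcone mu S C -> exists g,
        eqM mu C (fun m => SpRa nu g (v m)))) /\
  (exists S, coarsest_fan F nu S /\
     (forall a, exists C, maxcone nu S C /\
        eqM nu (fun n => SpRa mu a (w n)) C) /\
     (forall C, maxcone nu S C -> exists a,
        eqM nu C (fun n => SpRa mu a (w n)))).

(* support function psi_P(n) = min { v(u)(n) : u in P } (as an infimum) *)
Definition psiP (I J : Type) (r s : nat)
    (v : (I -> 'rV[RR]_r) -> (J -> 'rV[RR]_s) -> RR)
    (P : set (I -> 'rV[RR]_r)) (n : J -> 'rV[RR]_s) : RR :=
  inf [set v u n | u in P].

Definition is_min (S : set RR) (y : RR) : Prop := S y /\ forall z, S z -> y <= z.

Inductive inPN (J : Type) (s : nat) (nu : J -> J -> 'rV[RR]_s -> 'rV[RR]_s)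
  : ((J -> 'rV[RR]_s) -> RR) -> Prop :=
| PN_pt p : SpR nu p -> inPN nu p
| PN_min f g : inPN nu f -> inPN nu g -> inPN nu (fun n => Num.min (f n) (g n))
| PN_add f g : inPN nu f -> inPN nu g -> inPN nu (fun n => f n + g n).

(* Every point of [M] is linear on some chart (it is [w n] for some [n], and [n] lies
   in a maximal cone of Sigma(N)).  On any other chart it is superadditive, homogeneous
   and linear on the cones of a complete fan, hence the minimum of the linear forms of
   its full-dimensional cones.  So each chart image of [P] is a compact H-polyhedron,
   with finitely many vertices, and [I] is finite.  For [n] in [N_R], [w n] is linear
   on some chart [a], so [u |-> v u n] is a linear functional in chart [a]; it attains
   its minimum over [P] at a vertex of the chart-[a] image of [P].  Hence [psi_P] is
   the pointwise minimum of the finitely many [v s], [s] in [V(P)], each continuous on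
   every chart and in Sp_R(N). *)

From HB Require Import structures.
From mathcomp Require Import all_boot all_order all_algebra.
From mathcomp Require Import all_classical all_reals all_analysis.
From mathcomp Require Import Rstruct Rstruct_topology.
From Stdlib Require List.
From mathcomp Require Import ring lra.
Set Implicit Arguments. Unset Strict Implicit. Unset Printing Implicit Defensive.
Import Order.TTheory GRing.Theory Num.Theory.
Local Open Scope classical_set_scope.
Local Open Scope ring_scope.

Section DotProduct.
Variable r : nat.
Implicit Types u x y : 'rV[RR]_r.

Lemma dotv_is_linear u : linear_for *%R (dotv u).
Proof.
move=> a x y; rewrite /dotv mulr_sumr -big_split.
by apply: eq_bigr => i _; rewrite !mxE mulrDr mulrCA.
Qed.
HB.instance Definition _ u :=
  GRing.isLinear.Build RR 'rV[RR]_r RR *%R (dotv u) (dotv_is_linear u).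

Lemma dotvC u x : dotv u x = dotv x u.
Proof. by apply: eq_bigr => i _; rewrite mulrC. Qed.

Lemma dotv_ge0 u : 0 <= dotv u u.
Proof. by apply: sumr_ge0 => i _; rewrite -expr2 sqr_ge0. Qed.

Lemma dotv_eq0 u : (dotv u u == 0) = (u == 0).
Proof.
apply/idP/eqP => [|->]; last by rewrite linear0.
rewrite psumr_eq0 => [/allP uu0|i _]; last by rewrite -expr2 sqr_ge0.
apply/matrixP => i j; rewrite mxE (ord1 i).
by have /implyP/(_ isT) := uu0 j (mem_index_enum _); rewrite mulf_eq0 orbb => /eqP.
Qed.

Lemma dotv_mulmx u x (A : 'M[RR]_r) : dotv u (x *m A) = dotv (u *m A^T) x.
Proof.
rewrite /dotv; under eq_bigr do rewrite mxE mulr_sumr.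
rewrite exchange_big /=; apply: eq_bigr => i _; rewrite mxE mulr_suml.
by apply: eq_bigr => j _; rewrite mxE; ring.
Qed.

Lemma continuous_dotv u : continuous (dotv u).
Proof.
rewrite /dotv; elim: (index_enum _) => [|i s IH].
  under eq_fun do rewrite big_nil; exact: cst_continuous.
under eq_fun do rewrite big_cons.
move=> x; apply: (@continuousD RR RR^o) (IH x).
by apply: continuousM; [exact: cst_continuous|exact: coord_continuous].
Qed.

End DotProduct.

Lemma InP (T : eqType) (x : T) (s : seq T) : reflect (List.In x s) (x \in s).
Proof.
elim: s => [|a s IH] /=; first by right.
rewrite inE; apply: (iffP orP) => [[/eqP->|/IH]|[->|/IH]]; by [left|right|rewrite eqxx|].
Qed.

Lemma seq_pos_lower_bound (T : eqType) (s : seq T) (f : T -> RR) :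
  {in s, forall c, 0 < f c} -> exists2 e, 0 < e & {in s, forall c, e <= f c}.
Proof.
elim: s => [|a s IH] fs_gt0; first by exists 1.
have [|e e_gt0 le_e] := IH; first by move=> c cs; rewrite fs_gt0 // inE cs orbT.
exists (Num.min e (f a)); first by rewrite lt_min e_gt0 fs_gt0 ?mem_head.
by move=> c /predU1P [->|cs]; rewrite ge_min ?lexx ?orbT ?le_e.
Qed.

Lemma exists_small_avoiding (T : eqType) (s : seq T) (f : T -> RR) d : 0 < d ->
  exists t, [/\ 0 < t, t < d & {in s, forall c, t != f c}].
Proof.
move=> d_gt0; have [|e e_gt0 le_e] := @seq_pos_lower_bound _ [seq c <- s | 0 < f c] f.
  by move=> c; rewrite mem_filter => /andP [].
have [m_gt0 m_le_e m_le_d] : [/\ 0 < Num.min e d, Num.min e d <= e & Num.min e d <= d].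
  by rewrite lt_min e_gt0 d_gt0 !ge_min !lexx orbT.
exists (Num.min e d / 2); split; [lra|lra|move=> c cs].
have [fc_gt0|] := ltP 0 (f c); last by move=> fc_le0; apply/eqP; lra.
by have := le_e c; rewrite mem_filter fc_gt0 cs => /(_ isT) ?; apply/eqP; lra.
Qed.

Lemma seq_argmin (T : eqType) (s : seq T) (f : T -> RR) : s != [::] ->
  exists2 c, c \in s & {in s, forall c', f c <= f c'}.
Proof.
elim: s => [//|a [|b s] IH] _; first by exists a => [|c]; rewrite ?inE // => /eqP->.
have [//|c cs min_c] := IH.
have [fa_le|fc_lt] := leP (f a) (f c).
  exists a; first exact: mem_head.
  by move=> c' /predU1P [->//|/min_c]; apply: le_trans.
exists c; first by rewrite inE cs orbT.
by move=> c' /predU1P [->|/min_c //]; apply: ltW.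
Qed.

Lemma finite_of_injective (T : Type) (U : finType) (A : set T) (f : T -> U) :
  (forall x y, A x -> A y -> f x = f y -> x = y) ->
  exists s : seq T, forall x, A x <-> List.In x s.
Proof.
move=> f_inj; have [[x0 _]|A0] := pselect (exists x, A x); last first.
  by exists [::] => x; split => // Ax; apply: A0; exists x.
have [|g gP] := @boolp.choice U T
  (fun u y => (exists x, A x /\ f x = u) -> A y /\ f y = u).
  move=> u; have [[x Ax]|nex] := pselect (exists x, A x /\ f x = u); first by exists x.
  by exists x0 => /nex.
exists [seq g u | u <- enum U & `[< exists x, A x /\ f x = u >]] => x.
split=> [Ax|/List.in_map_iff [u [<- /List.filter_In [_ /asboolP /gP []//]]]].
have /gP [Agx fgx] : exists y, A y /\ f y = f x by exists x.
apply/List.in_map_iff; exists (f x); split; first exact: f_inj.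
by apply/List.filter_In; split; [apply/InP; rewrite mem_enum|apply/asboolP; exists x].
Qed.

Lemma exists_maximal_above (T : Type) (R : T -> T -> Prop) (L : seq T) x :
  (forall x, R x x) -> (forall x y z, R x y -> R y z -> R x z) ->
  exists y, [/\ y = x \/ List.In y L, R x y & forall z, List.In z L -> R y z -> R z y].
Proof.
move=> Rxx Rtr; elim: L x => [|a L IH] x; first by exists x; split=> //; left.
have [y [y_x_L Rxy y_max]] := IH x.
have [Rya|Rya] := pselect (R y a).
  have [y' [y'_a_L Ray' y'_max]] := IH a.
  exists y'; split.
  - by right; case: y'_a_L => [->|]; [left|right].
  - exact: Rtr Rxy (Rtr _ _ _ Rya Ray').
  - by move=> z [<-|/y'_max].
exists y; split=> [||z [<-|/y_max] //].
- by case: y_x_L => [->|]; [left|right; right].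
- exact: Rxy.
Qed.

Lemma count_lt_in (T : eqType) (a1 a2 : pred T) (s : seq T) :
  {in s, forall x, a1 x -> a2 x} -> (exists2 x, x \in s & a2 x && ~~ a1 x) ->
  (count a1 s < count a2 s)%N.
Proof.
have le_b b : (a1 b -> a2 b) -> (a1 b <= a2 b)%N by case: (a1 b) => // ->.
move=> sub12 [x]; elim: s sub12 => //= b s IH sub12.
have sub12s : {in s, forall x, a1 x -> a2 x}.
  by move=> y s_y; apply: sub12; rewrite inE s_y orbT.
rewrite inE => /predU1P [-> /andP [a2b /negPf a1b]|s_x a21x].
  rewrite a1b a2b add0n add1n ltnS.
  elim: s sub12s {IH sub12} => //= c s IHs sub; rewrite leq_add ?IHs //.
    by apply: le_b; apply: sub; rewrite mem_head.
  by move=> y s_y; apply: sub; rewrite inE s_y orbT.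
rewrite -addnS; apply: leq_add; last exact: IH.
by apply: le_b; apply: sub12; rewrite mem_head.
Qed.

Lemma compact_argmin n (K : set 'rV[RR]_n) (f : 'rV[RR]_n -> RR) :
  compact K -> continuous f -> K !=set0 ->
  exists2 x, K x & forall y, K y -> f x <= f y.
Proof.
move=> cK cf neK; have [x Kx min_x] := EVT_min_rV neK cK (continuous_subspaceT cf).
by exists x => [|y Ky]; [rewrite inE in Kx|apply: min_x; rewrite inE].
Qed.

Section HPolyhedron.
Variables (r : nat) (cs : seq ('rV[RR]_r * RR)).
Implicit Types (x y d : 'rV[RR]_r) (c : 'rV[RR]_r * RR).

Definition Hpoly : set 'rV[RR]_r := [set y | forall c, c \in cs -> c.2 <= dotv c.1 y].

Definition active x c : bool := dotv c.1 x == c.2.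

Definition tangent x d : Prop := forall c, c \in cs -> active x c -> dotv c.1 d = 0.

Lemma tangentN x d : tangent x d -> tangent x (- d).
Proof. by move=> tan_d c cs_c act; rewrite linearN /= tan_d ?oppr0. Qed.

Lemma Hpoly_segment x d : Hpoly x -> tangent x d ->
  exists2 e, 0 < e & forall t, `|t| <= e -> Hpoly (x + t *: d).
Proof.
move=> Kx tan_d.
pose f c := if active x c then 1 else (dotv c.1 x - c.2) / (`|dotv c.1 d| + 1).
have [|e e_gt0 le_e] := @seq_pos_lower_bound _ cs f.
  move=> c cs_c; rewrite /f; case: ifPn => // /negPf; rewrite /active => inact.
  apply: divr_gt0; last by rewrite ltr_wpDl.
  by rewrite subr_gt0 lt_def inact Kx.
exists e => // t le_t c cs_c; rewrite linearD linearZ /=.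
have [act|inact] := boolP (active x c).
  by rewrite tan_d // mulr0 addr0; apply: Kx.
have := le_e c cs_c; rewrite /f (negPf inact) ler_pdivlMr ?ltr_wpDl // => le_ec.
have le_td : `|t| * `|dotv c.1 d| <= e * `|dotv c.1 d| by rewrite ler_wpM2r.
have := ler_norm (- (t * dotv c.1 d)); rewrite normrN normrM.
have := normr_ge0 (dotv c.1 d); nra.
Qed.

Lemma vertex_tangent_eq0 x d : vertex Hpoly x -> tangent x d -> d = 0.
Proof.
move=> [Kx [u min_u]] tan_d; have [e e_gt0 seg] := Hpoly_segment Kx tan_d.
apply/eqP/negPn/negP => d_neq0.
have moved t : t != 0 -> x + t *: d <> x.
  move=> t_neq0 /(congr1 (fun z => z - x)); rewrite addrAC subrr add0r => /eqP.
  by rewrite scaler_eq0 (negPf t_neq0) (negPf d_neq0).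
have := min_u _ (seg e _) (moved e _); have := min_u _ (seg (- e) _) (moved (- e) _).
rewrite normrN gtr0_norm ?oppr_eq0 ?gt_eqF // !linearD !linearZ /=; lra.
Qed.

Lemma tangent_eq0_vertex x : Hpoly x -> (forall d, tangent x d -> d = 0) ->
  vertex Hpoly x.
Proof.
move=> Kx tan0; split=> //; exists (\sum_(c <- cs | active x c) c.1) => y Ky y_neq_x.
have dotv_sum z : dotv (\sum_(c <- cs | active x c) c.1) z =
    \sum_(c <- cs | active x c) dotv c.1 z.
  by rewrite dotvC linear_sum; apply: eq_bigr => c _; rewrite dotvC.
rewrite !dotv_sum -subr_gt0 -sumrB big_seq_cond lt_def sumr_ge0 ?andbT; last first.
  by move=> c /andP [cs_c /eqP act]; rewrite act subr_ge0 Ky.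
rewrite psumr_eq0; last by move=> c /andP [cs_c /eqP act]; rewrite act subr_ge0 Ky.
apply/negP => /allP flat; apply: y_neq_x; apply/eqP; rewrite -subr_eq0; apply/eqP.
apply: tan0 => c cs_c act; rewrite linearB /=; apply/eqP.
by have /implyP := flat c cs_c; rewrite cs_c act; apply.
Qed.

Lemma Hpoly_vertices_finite : exists s, forall x, vertex Hpoly x <-> List.In x s.
Proof.
apply: (@finite_of_injective _ _ _ (fun x => map_tuple (active x) (in_tuple cs))).
move=> x y Vx Vy /(congr1 val) /= /eq_in_map same_act.
apply/eqP; rewrite eq_sym -subr_eq0; apply/eqP/(vertex_tangent_eq0 Vx).
move=> c cs_c act; have := act; rewrite same_act // /active => /eqP act_y.
by move/eqP: act => act_x; rewrite linearB /= act_x act_y subrr.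
Qed.

Lemma compact_Hpoly_line x d : compact Hpoly -> (forall t, Hpoly (x + t *: d)) -> d = 0.
Proof.
move=> cK line; apply/eqP/negPn/negP => d_neq0.
have dd_gt0 : 0 < dotv d d by rewrite lt_def dotv_eq0 d_neq0 dotv_ge0.
have cont_Nd z : {for z, continuous (fun y => - dotv d y)}.
  exact: (@continuousN RR RR^o _ _ z (@continuous_dotv r d z)).
have [|z _ max_z] := compact_argmin cK cont_Nd; first by exists (x + 0 *: d).
pose t := (dotv d z - dotv d x + 1) / dotv d d.
have := max_z _ (line t); rewrite linearD linearZ /= /t mulfVK ?gt_eqF //; lra.
Qed.

(* Starting from [x], move along [d] or [- d] until a new constraint becomes active. *)
Lemma Hpoly_exit x d c0 : Hpoly x -> tangent x d -> c0 \in cs -> dotv c0.1 d != 0 ->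
  exists t, Hpoly (x + t *: d) /\ (count (active x) cs < count (active (x + t *: d)) cs)%N.
Proof.
move=> Kx; wlog c0d_lt0 : d / dotv c0.1 d < 0 => [wl tan_d cs_c0|tan_d cs_c0 _].
  rewrite neq_lt => /orP [c0d_lt0|c0d_gt0]; first by apply: wl; rewrite ?lt_eqF.
  have c0Nd_lt0 : dotv c0.1 (- d) < 0 by rewrite linearN /= oppr_lt0.
  have [t tP] := wl (- d) c0Nd_lt0 (tangentN tan_d) cs_c0 (negbT (lt_eqF c0Nd_lt0)).
  by exists (- t); rewrite scaleNr -scalerN.
pose S := [seq c <- cs | dotv c.1 d < 0].
pose f c := (dotv c.1 x - c.2) / - dotv c.1 d.
have S_c0 : c0 \in S by rewrite mem_filter c0d_lt0 cs_c0.
have [|c1 S_c1 min_c1] := @seq_argmin _ S f; first by apply/eqP => S0; rewrite S0 in S_c0.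
move: S_c1; rewrite mem_filter => /andP [c1d_lt0 cs_c1].
have inact_S c : c \in cs -> dotv c.1 d < 0 -> ~~ active x c.
  by move=> cs_c cd_lt0; apply: contraTN cd_lt0 => /tan_d ->; rewrite ?ltxx.
have f_ge0 : 0 <= f c1.
  apply: divr_ge0; first by rewrite subr_ge0; apply: Kx.
  by rewrite oppr_ge0; apply: ltW.
exists (f c1); split.
  move=> c cs_c; rewrite linearD linearZ /=.
  have [cd_lt0|cd_ge0] := ltP (dotv c.1 d) 0; last first.
    by have := Kx c cs_c; have := mulr_ge0 f_ge0 cd_ge0; lra.
  have := min_c1 c; rewrite mem_filter cd_lt0 cs_c => /(_ isT).
  by rewrite {2}/f ler_pdivlMr ?oppr_gt0 // mulrN; lra.
apply: count_lt_in.
  move=> c cs_c act; rewrite /active linearD linearZ /= tan_d // mulr0 addr0; exact: act.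
exists c1 => //; rewrite inact_S // andbT /active linearD linearZ /= /f.
by apply/eqP; field; rewrite ?oppr_eq0 lt_eqF.
Qed.

Lemma compact_Hpoly_argmin_vertex g : compact Hpoly -> Hpoly !=set0 ->
  exists x, vertex Hpoly x /\ forall y, Hpoly y -> dotv g x <= dotv g y.
Proof.
move=> cK neK; pose Min x := Hpoly x /\ forall y, Hpoly y -> dotv g x <= dotv g y.
have [x0 Kx0 min_x0] := compact_argmin cK (@continuous_dotv r g) neK.
have [x [[Kx min_x] max_x]] : exists x, Min x /\
    forall y, Min y -> (count (active y) cs <= count (active x) cs)%N.
  pose P n := `[< exists x, Min x /\ count (active x) cs = n >].
  have exP : exists n, P n by exists (count (active x0) cs); apply/asboolP; exists x0.
  have ubP n : P n -> (n <= size cs)%N by move=> /asboolP [x [_ <-]]; apply: count_size.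
  case: (ex_maxnP exP ubP) => n /asboolP [x [Min_x <-]] max_n.
  by exists x; split=> // y Min_y; apply: max_n; apply/asboolP; exists y.
exists x; split=> //; apply: tangent_eq0_vertex => // d tan_d.
have gd0 : dotv g d = 0.
  have [e e_gt0 seg] := Hpoly_segment Kx tan_d.
  have := min_x _ (seg e _); have := min_x _ (seg (- e) _).
  rewrite normrN gtr0_norm // !linearD !linearZ /= => /(_ (lexx _)) + /(_ (lexx _)); nra.
have [[c0 [cs_c0 c0d]]|flat] := pselect (exists c, c \in cs /\ dotv c.1 d != 0).
  have [t [Kt lt_count]] := Hpoly_exit Kx tan_d cs_c0 c0d.
  have /max_x : Min (x + t *: d).
    by split=> // y Ky; rewrite linearD linearZ /= gd0 mulr0 addr0; apply: min_x.
  by rewrite leqNgt lt_count.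
apply: (compact_Hpoly_line (x := x) cK) => t c cs_c; rewrite linearD linearZ /=.
have -> : dotv c.1 d = 0 by apply/eqP/negPn/negP => nz; apply: flat; exists c.
by rewrite mulr0 addr0; apply: Kx.
Qed.

End HPolyhedron.

Definition spanning r (gs : seq 'rV[RR]_r) : Prop := forall y : 'rV[RR]_r,
  exists al : 'I_(size gs) -> RR, y = \sum_(i < size gs) al i *: nth 0 gs i.

Lemma spanning_or_orthogonal r (gs : seq 'rV[RR]_r) :
  spanning gs \/ exists2 h : 'rV[RR]_r, h != 0 & forall g, g \in gs -> dotv h g = 0.
Proof.
pose G := \matrix_(i < size gs) nth 0 gs i.
have [G_full|G_deficient] := boolP (row_full G).
  left=> y; have /submxP [D ->] := submx_full y G_full.
  by exists (fun i => D 0 i); rewrite mulmx_sum_row; apply: eq_bigr => i _; rewrite rowK.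
right; have /rowV0Pn [h /sub_kermxP hG h_neq0] : kermx G^T != 0.
  rewrite -mxrank_eq0 mxrank_ker mxrank_tr subn_eq0 -ltnNge.
  by rewrite ltn_neqAle rank_leq_col andbT.
exists h => // g gs_g; have g_idx : (index g gs < size gs)%N by rewrite index_mem.
rewrite -(nth_index 0 gs_g); have /matrixP/(_ 0 (Ordinal g_idx)) := hG.
by rewrite !mxE => <-; apply: eq_bigr => k _; rewrite !mxE.
Qed.

Lemma affine_root (a b t : RR) : b != 0 -> a + t * b = 0 -> t = - a / b.
Proof. by move=> b_neq0 /eqP; rewrite addr_eq0 => /eqP ->; rewrite opprK mulfK. Qed.

Lemma exists_off_hyperplanes r (hs : seq 'rV[RR]_r) : {in hs, forall h, h != 0} ->
  exists z, {in hs, forall h, dotv h z != 0}.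
Proof.
elim: hs => [|h hs IH] hs_neq0; first by exists 0.
have [|z z_off] := IH; first by move=> k hs_k; apply: hs_neq0; rewrite inE hs_k orbT.
have hh_neq0 : dotv h h != 0 by rewrite dotv_eq0 hs_neq0 ?mem_head.
have [t [_ _ t_off]] :=
  exists_small_avoiding (h :: hs) (fun k => - dotv k z / dotv k h) ltr01.
exists (z + t *: h) => k hs_k; rewrite linearD linearZ /=.
have [kh0|kh_neq0] := eqVneq (dotv k h) 0; last first.
  by apply: contraNneq (t_off k hs_k) => /(affine_root kh_neq0) ->.
rewrite kh0 mulr0 addr0; move: hs_k; rewrite inE => /predU1P [kh|]; last exact: z_off.
by move: hh_neq0; rewrite -{1}kh kh0 eqxx.
Qed.

Lemma cone_gen_orthogonal r (gs : seq 'rV[RR]_r) (h y : 'rV[RR]_r) :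
  (forall g, g \in gs -> dotv h g = 0) -> cone_gen gs y -> dotv h y = 0.
Proof.
move=> h_orth [lam [_ ->]]; rewrite linear_sum big1 // => i _.
by rewrite linearZ /= h_orth ?mulr0 // mem_nth.
Qed.

Section SuperadditivePiecewiseLinear.
Variables (r : nat) (phi : 'rV[RR]_r -> RR) (T : Type) (L : seq T).
Variables (gens : T -> seq 'rV[RR]_r) (lin : T -> 'rV[RR]_r).
Hypothesis phi_superadd : forall x y, phi x + phi y <= phi (x + y).
Hypothesis phi_homog : forall t x, 0 <= t -> phi (t *: x) = t * phi x.
Hypothesis cover : forall x, exists C, List.In C L /\ cone_gen (gens C) x.
Hypothesis phi_lin :
  forall C x, List.In C L -> cone_gen (gens C) x -> phi x = dotv (lin C) x.

(* Write [y] as a point of the cone minus a multiple of the sum of the generators. *)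
Lemma phi_le_spanning C : List.In C L -> spanning (gens C) ->
  forall y, phi y <= dotv (lin C) y.
Proof.
move=> LC spC y; have [al ->] := spC y.
pose z := \sum_(i < size (gens C)) nth 0 (gens C) i.
pose m := \sum_(i < size (gens C)) `|al i|.
have m_ge0 : 0 <= m by apply: sumr_ge0.
have Cz : cone_gen (gens C) z.
  exists (fun _ => 1); split=> [i|]; first exact: ler01.
  by apply: eq_bigr => i _; rewrite scale1r.
have Cmz : cone_gen (gens C) (m *: z + \sum_(i < size (gens C)) al i *: nth 0 (gens C) i).
  exists (fun i => m + al i); split.
    move=> i; have : `|al i| <= m by rewrite /m (bigD1 i) //= lerDl sumr_ge0.
    by have := ler_norm (- al i); rewrite normrN; lra.
  by rewrite /z scaler_sumr -big_split; apply: eq_bigr => i _; rewrite scalerDl.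
have := phi_superadd (m *: z) (\sum_(i < size (gens C)) al i *: nth 0 (gens C) i).
by rewrite (phi_lin LC Cmz) phi_homog // (phi_lin LC Cz) linearD linearZ /=; lra.
Qed.

Lemma flat_cones_avoidable : exists z, forall x, exists bad : seq RR,
  forall t C, List.In C L -> ~ spanning (gens C) -> cone_gen (gens C) (x + t *: z) ->
  t \in bad.
Proof.
pose Flat := [seq C <- L | ~~ `[< spanning (gens C) >]].
have [|h hP] := @boolp.choice T 'rV[RR]_r (fun C h => List.In C Flat ->
    h != 0 /\ forall g, g \in gens C -> dotv h g = 0).
  move=> C; have [spC|[h h_neq0 h_orth]] := spanning_or_orthogonal (gens C).
    by exists 0 => /List.filter_In [_ /negP []]; apply/asboolP.
  by exists h.
have [|z z_off] := @exists_off_hyperplanes r (map h Flat).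
  by move=> k /InP /List.in_map_iff [C [<- /hP []]].
exists z => x; exists (map (fun C => - dotv (h C) x / dotv (h C) z) Flat).
move=> t C LC flatC Ct.
have FlatC : List.In C Flat by apply/List.filter_In; split=> //; apply/negP => /asboolP.
have [_ h_orth] := hP C FlatC.
have hz_neq0 : dotv (h C) z != 0 by apply: z_off; apply/InP/List.in_map.
have := cone_gen_orthogonal h_orth Ct.
rewrite linearD linearZ /= => /(affine_root hz_neq0) ->.
by apply/InP/(List.in_map (fun C => - dotv (h C) x / dotv (h C) z)).
Qed.

(* Moving from [x] slightly in a direction avoiding the flat cones lands in a
   spanning cone, whose linear form is therefore almost tight at [x]. *)
Lemma superadditive_pl_min : exists ls : seq 'rV[RR]_r,
  (forall l, l \in ls -> forall y, phi y <= dotv l y) /\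
  (forall x, exists2 l, l \in ls & dotv l x = phi x).
Proof.
pose Full := [seq C <- L | `[< spanning (gens C) >]].
have full_le C : List.In C Full -> forall y, phi y <= dotv (lin C) y.
  by move=> /List.filter_In [LC /asboolP]; apply: phi_le_spanning.
exists (map lin Full); split=> [l /InP /List.in_map_iff [C [<- /full_le]] //|x].
have [//|no_tight] := pselect (exists2 l, l \in map lin Full & dotv l x = phi x).
exfalso.
have gap C : List.In C Full -> phi x < dotv (lin C) x.
  move=> FullC; rewrite lt_def full_le // andbT; apply/eqP => tight.
  by apply: no_tight; exists (lin C); [apply/InP/List.in_map|].
have [z flat_bad] := flat_cones_avoidable; have [bad bad_t] := flat_bad x.
pose M := `|phi (- z)|.
have M_ge0 : 0 <= M := normr_ge0 _.
pose den l := `|dotv l z| + M + 1.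
have den_gt0 l : 0 < den l by rewrite /den; have := normr_ge0 (dotv l z); lra.
have [|e e_gt0 le_e] :=
  @seq_pos_lower_bound _ (map lin Full) (fun l => (dotv l x - phi x) / den l).
  by move=> l /InP /List.in_map_iff [C [<- FullC]]; rewrite divr_gt0 // subr_gt0 gap.
have [t [t_gt0 t_lt_e t_good]] := exists_small_avoiding bad id e_gt0.
have [C [LC Ct]] := cover (x + t *: z).
have [spC|flatC] := pselect (spanning (gens C)); last first.
  by have := t_good t (bad_t t C LC flatC Ct); rewrite eqxx.
have FullC : List.In C Full by apply/List.filter_In; split=> //; apply/asboolP.
have := phi_superadd (x + t *: z) (t *: - z).
rewrite phi_homog ?(ltW t_gt0) // -addrA -scalerDr subrr scaler0 addr0 (phi_lin LC Ct).
rewrite linearD linearZ /= => super.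
have Full_lC : lin C \in map lin Full by apply/InP/List.in_map.
have := le_e (lin C) Full_lC; rewrite ler_pdivlMr // => le_gap.
have lt_den : t * den (lin C) < e * den (lin C) by rewrite ltr_pM2r.
have := ler_wpM2l (ltW t_gt0) (ler_norm (- dotv (lin C) z)); rewrite normrN => le_lz.
have := ler_wpM2l (ltW t_gt0) (ler_norm (- phi (- z))); rewrite normrN -/M => le_M.
move: lt_den le_gap; rewrite /den; lra.
Qed.

End SuperadditivePiecewiseLinear.

Section Polyptych.
Variables (F : set RR) (I : Type) (r : nat) (mu : I -> I -> 'rV[RR]_r -> 'rV[RR]_r).
Hypothesis mu_pl : polyptych F mu.

Lemma piinv_isMR a x : isMR mu (piinv mu a x).
Proof. by move=> b c; case: mu_pl => _ [_ [_ [_ mu_trans]]]; rewrite /piinv mu_trans. Qed.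

Lemma isMR_piinv m a : isMR mu m -> piinv mu a (m a) = m.
Proof. by move=> mMR; apply: funext => b; rewrite /piinv -mMR. Qed.

Lemma piinv_at a x : piinv mu a x a = x.
Proof. by case: mu_pl => _ [_ [mu_id _]]; apply: mu_id. Qed.

Lemma piinv_change a b x : piinv mu a x = piinv mu b (mu a b x).
Proof. by rewrite -{1}(isMR_piinv b (piinv_isMR a x)). Qed.

Lemma coarsest_fan_maxcone S m : coarsest_fan F mu S -> isMR mu m ->
  exists C, maxcone mu S C /\ C m.
Proof.
move=> [[S_fan _] _] mMR; case: mu_pl => [[a]] _.
have [_ /(_ (m a)) [_ [/List.in_map_iff [C [<- SC]]]]] := S_fan a.
rewrite /= isMR_piinv // => Cm.
have subM_refl A : subM mu A A by move=> ?.
have subM_trans A B D : subM mu A B -> subM mu B D -> subM mu A D.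
  by move=> AB BD x xMR Ax; apply: BD => //; apply: AB.
have [C' [C'_C_S CC' C'_max]] := @exists_maximal_above _ _ S C subM_refl subM_trans.
exists C'; split; last exact: CC'.
by split=> //; case: C'_C_S => [->|].
Qed.

Lemma SpR_chart_superadd p a x y : SpR mu p ->
  p (piinv mu a x) + p (piinv mu a y) <= p (piinv mu a (x + y)).
Proof.
move=> [superadd _]; have [/(_ a) + _] := superadd _ _ (piinv_isMR a x) (piinv_isMR a y).
by rewrite /addc !piinv_at.
Qed.

Lemma SpR_chart_homog p a t x : SpR mu p -> 0 <= t ->
  p (piinv mu a (t *: x)) = t * p (piinv mu a x).
Proof.
by move=> [_ homog] t_ge0; rewrite -(homog a t _ t_ge0 (piinv_isMR a x)) /smulc piinv_at.
Qed.

(* The mutation [mu a b] is linear on the cones of a complete fan, so a point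
   linear on chart [b] is piecewise linear on chart [a]. *)
Lemma SpR_chart_min_linear p a b u : SpR mu p ->
  (forall y, p (piinv mu b y) = dotv u y) ->
  exists ls : seq 'rV[RR]_r,
    (forall l, l \in ls -> forall y, p (piinv mu a y) <= dotv l y) /\
    (forall x, exists2 l, l \in ls & dotv l x = p (piinv mu a x)).
Proof.
move=> pSpR p_lin; have p_mu x : p (piinv mu a x) = dotv u (mu a b x).
  by rewrite (piinv_change a b) p_lin.
case: mu_pl => _ [/(_ a b) [_ [L [[[L_rat _] L_cover] L_lin]]] _].
have [|q qP] := @boolp.choice _ _ (fun C (q : seq 'rV[RR]_r * 'rV[RR]_r) => List.In C L ->
    (forall x, C x <-> cone_gen q.1 x) /\ forall x, C x -> p (piinv mu a x) = dotv q.2 x).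
  move=> C; have [LC|] := pselect (List.In C L); last by exists ([::], 0).
  have [gs [_ C_gs]] := L_rat C LC; have [A [_ A_lin]] := L_lin C LC.
  by exists (gs, u *m A^T) => _; split=> // x Cx; rewrite p_mu A_lin // dotv_mulmx.
apply: (@superadditive_pl_min r _ _ L (fun C => (q C).1) (fun C => (q C).2)).
- by move=> x y; apply: SpR_chart_superadd.
- by move=> t x; apply: SpR_chart_homog.
- move=> x; have [C [LC Cx]] := L_cover x.
  by exists C; split=> //; apply/(qP C LC).1.
- by move=> C x LC /(qP C LC).1; apply: (qP C LC).2.
Qed.

Lemma SpR_chart_superlevel_Hpoly p a b u c : SpR mu p ->
  (forall y, p (piinv mu b y) = dotv u y) ->
  exists cs, forall x, c <= p (piinv mu a x) <-> Hpoly cs x.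
Proof.
move=> pSpR p_lin; have [ls [ls_ge ls_tight]] := SpR_chart_min_linear a pSpR p_lin.
exists [seq (l, c) | l <- ls] => x; split.
  by move=> c_le cl /mapP [l ls_l ->]; apply: le_trans c_le (ls_ge l ls_l x).
by move=> Kx; have [l ls_l <-] := ls_tight x; apply: (Kx (l, c)); apply: map_f.
Qed.

End Polyptych.

Lemma big_ind_In (R T : Type) (K : R -> Prop) (op : R -> R -> R) (idx : R)
    (s : seq T) (F : T -> R) :
  K idx -> (forall x y, K x -> K y -> K (op x y)) ->
  (forall t, List.In t s -> K (F t)) -> K (\big[op/idx]_(t <- s) F t).
Proof.
move=> Kidx Kop; elim: s => [|t s IH] Ks; first by rewrite big_nil.
by rewrite big_cons; apply: Kop; [apply: Ks; left|apply: IH => t' st'; apply: Ks; right].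
Qed.

Lemma bigmin_fun_le (X T : Type) (f0 : X -> RR) (F : T -> X -> RR) (s : seq T) t x :
  List.In t s -> (\big[Order.min_fun/f0]_(t <- s) F t) x <= F t x.
Proof.
elim: s => [[]|t' s IH] /= st; rewrite big_cons /Order.min_fun ge_min.
by case: st => [->|/IH ->]; rewrite ?lexx ?orbT.
Qed.

Lemma is_min_inf (S : set RR) y : is_min S y -> inf S = y.
Proof.
move=> [Sy y_min]; apply/eqP; rewrite eq_le; apply/andP; split.
  by apply: ge_inf => //; exists y => z /y_min.
by apply: lb_le_inf; [exists y|move=> z /y_min].
Qed.

Section StrictDualPair.
Variables (F : set RR) (I : finType) (J : Type) (r s : nat).
Variables (mu : I -> I -> 'rV[RR]_r -> 'rV[RR]_r) (nu : J -> J -> 'rV[RR]_s -> 'rV[RR]_s).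
Variables (v : (I -> 'rV[RR]_r) -> (J -> 'rV[RR]_s) -> RR).
Variables (w : (J -> 'rV[RR]_s) -> (I -> 'rV[RR]_r) -> RR).
Hypotheses (mu_pl : polyptych F mu) (nu_pl : polyptych F nu).
Hypothesis vw_dual : strict_dual_pair F mu nu v w.

Lemma dual_SpR_v m : isMR mu m -> SpR nu (v m).
Proof. by case: vw_dual => + _; apply. Qed.

Lemma dual_v_w m n : isMR mu m -> isMR nu n -> v m n = w n m.
Proof. by case: vw_dual => _ [_ [_ [_ [vw _]]]]; apply: vw. Qed.

Lemma dual_v_chart_linear m : isMR mu m ->
  exists g u, forall y, v m (piinv nu g y) = dotv u y.
Proof.
move=> mMR; case: vw_dual => _ [_ [_ [_ [_ [_ [_ [_ [_ [[S [S_fan [_ S_max]]] _]]]]]]]]].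
have [C [maxC Cm]] := coarsest_fan_maxcone mu_pl S_fan mMR.
have [g [/(_ m mMR Cm) [_ [u v_lin]] _]] := S_max C maxC.
by exists g, u.
Qed.

Lemma dual_w_chart_linear n : isMR nu n ->
  exists a u, forall x, w n (piinv mu a x) = dotv u x.
Proof.
move=> nMR; case: vw_dual => _ [_ [_ [_ [_ [_ [_ [_ [_ [_ [S [S_fan [_ S_max]]]]]]]]]]]].
have [C [maxC Cn]] := coarsest_fan_maxcone nu_pl S_fan nMR.
have [a [/(_ n nMR Cn) [_ [u w_lin]] _]] := S_max C maxC.
by exists a, u.
Qed.

Lemma dual_Sp_chart_linear q : Sp F mu q ->
  exists b u, forall y, q (piinv mu b y) = dotv u y.
Proof.
move=> qSp; case: vw_dual => _ [_ [_ [_ [_ [_ [_ [_ [w_onto _]]]]]]]].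
have [n [[nMR _] w_q]] := w_onto q qSp; have [b [u w_lin]] := dual_w_chart_linear nMR.
by exists b, u => y; rewrite -w_q ?w_lin //; apply: (piinv_isMR mu_pl).
Qed.

Lemma v_chart_continuous m g : isMR mu m -> continuous (fun y => v m (piinv nu g y)).
Proof.
move=> mMR; have [g' [u v_lin]] := dual_v_chart_linear mMR.
have -> : (fun y => v m (piinv nu g y)) = dotv u \o nu g g'.
  by apply: funext => y; rewrite /= (piinv_change nu_pl g g') v_lin.
case: nu_pl => _ [/(_ g g') [nu_cont _] _].
by move=> y; exact: (continuous_comp (nu_cont y) (@continuous_dotv s u (nu g g' y))).
Qed.

Variable P : set (I -> 'rV[RR]_r).
Hypothesis P_pl : PLpolytope F mu P.

Lemma PLpolytope_isMR m : P m -> isMR mu m.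
Proof. by move=> Pm; case: P_pl => [[l [p [c [_ [_ /(_ m) [/(_ Pm) []]]]]]]]. Qed.

Lemma PLpolytope_chart_Hpoly a : exists cs, [set x | P (piinv mu a x)] = Hpoly cs.
Proof.
case: P_pl => [[l [p [c [pSp [_ P_def]]]]] _].
have [|cs csP] := @boolp.choice 'I_l _
    (fun i cs => forall x, c i <= p i (piinv mu a x) <-> Hpoly cs x).
  move=> i; have [b [u p_lin]] := dual_Sp_chart_linear (pSp i).
  exact (SpR_chart_superlevel_Hpoly mu_pl a (c i) (proj1 (pSp i)) p_lin).
exists (flatten [seq cs i | i <- enum 'I_l]); apply/seteqP; split=> x /=.
  move=> /P_def [_ Px] ci /flattenP [_ /mapP [i _ ->] cs_ci].
  exact: (csP i x).1 (Px i) ci cs_ci.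
move=> Kx; apply/P_def; split; first exact: (piinv_isMR mu_pl).
move=> i; apply/(csP i x) => ci cs_ci; apply: Kx.
by apply/flattenP; exists (cs i) => //; apply: map_f; rewrite mem_enum.
Qed.

Lemma Vert_chart_finite a : exists Vl : seq (I -> 'rV[RR]_r),
  forall m, P m /\ vertex [set x | P (piinv mu a x)] (m a) <-> List.In m Vl.
Proof.
have [cs csE] := PLpolytope_chart_Hpoly a; have [xs xsP] := Hpoly_vertices_finite cs.
exists (map (piinv mu a) xs) => m; split.
  move=> [Pm]; rewrite csE => /xsP xs_ma; rewrite -(isMR_piinv a (PLpolytope_isMR Pm)).
  exact: List.in_map.
move=> /List.in_map_iff [x [<- /xsP Vx]]; rewrite (piinv_at mu_pl) csE; split=> //.
by have : [set x | P (piinv mu a x)] x by rewrite csE; exact: (proj1 Vx).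
Qed.

Lemma Vert_finite : exists Vs, forall m, Vert mu P m <-> List.In m Vs.
Proof.
have [Vl VlP] := @boolp.choice I _ (fun a Vl => forall m,
  P m /\ vertex [set x | P (piinv mu a x)] (m a) <-> List.In m Vl) Vert_chart_finite.
exists (flatten [seq Vl a | a <- enum I]) => m; split.
  move=> [Pm [a Va]]; apply/List.in_concat; exists (Vl a); split; last exact/VlP.
  by apply: List.in_map; apply/InP; rewrite mem_enum.
move=> /List.in_concat [_ [/List.in_map_iff [a [<- _]] /VlP [Pm Va]]].
by split=> //; exists a.
Qed.

Lemma PLpolytope_chart_argmin_vertex a u : P !=set0 ->
  exists2 s0, Vert mu P s0 & forall m, P m -> dotv u (s0 a) <= dotv u (m a).
Proof.
move=> [m0 Pm0]; have [cs csE] := PLpolytope_chart_Hpoly a.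
have cK : compact (Hpoly cs) by rewrite -csE; case: P_pl => _; apply.
have neK : Hpoly cs !=set0.
  by exists (m0 a); rewrite -csE /= isMR_piinv //; exact: PLpolytope_isMR Pm0.
have [x [Vx x_min]] := compact_Hpoly_argmin_vertex u cK neK.
have P_x : P (piinv mu a x) by have : [set x | P (piinv mu a x)] x by rewrite csE; case: Vx.
exists (piinv mu a x); first by split=> //; exists a; rewrite (piinv_at mu_pl) csE.
move=> m Pm; rewrite (piinv_at mu_pl); apply: x_min.
by rewrite -csE /= isMR_piinv //; exact: PLpolytope_isMR Pm.
Qed.

Lemma Vert_nonempty : P !=set0 -> Vert mu P !=set0.
Proof.
case: mu_pl => [[a]] _ neP.
by have [s0 V_s0 _] := PLpolytope_chart_argmin_vertex a 0 neP; exists s0.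
Qed.

(* [v (-) n = w n] is linear on some chart [a] of [M]. *)
Lemma Vert_argmin n : isMR nu n -> P !=set0 ->
  exists2 s0, Vert mu P s0 & forall m, P m -> v s0 n <= v m n.
Proof.
move=> nMR neP; have [a [u w_lin]] := dual_w_chart_linear nMR.
have v_chart m : isMR mu m -> v m n = dotv u (m a).
  by move=> mMR; rewrite dual_v_w // -{1}(isMR_piinv a mMR) w_lin.
have [s0 [P_s0 V_s0] s0_min] := PLpolytope_chart_argmin_vertex a u neP.
exists s0 => // m Pm.
by rewrite (v_chart _ (PLpolytope_isMR P_s0)) (v_chart _ (PLpolytope_isMR Pm)) s0_min.
Qed.

Lemma psiP_is_min n : isMR nu n -> P !=set0 ->
  is_min [set v u n | u in P] (psiP v P n) /\
  is_min [set v u n | u in Vert mu P] (psiP v P n).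
Proof.
move=> nMR neP; have [s0 [P_s0 V_s0] s0_min] := Vert_argmin nMR neP.
have min_P : is_min [set v u n | u in P] (v s0 n).
  by split=> [|_ [m Pm <-]]; [exists s0|apply: s0_min].
rewrite /psiP (is_min_inf min_P); split=> //.
by split=> [|_ [m [Pm _] <-]]; [exists s0|apply: s0_min].
Qed.

Lemma psiP_bigmin Vs s0 : (forall m, Vert mu P m <-> List.In m Vs) -> Vert mu P s0 ->
  forall n, isMR nu n -> psiP v P n = (\big[Order.min_fun/v s0]_(t <- Vs) v t) n.
Proof.
move=> VsP V_s0 n nMR; have neP : P !=set0 by exists s0; case: V_s0.
have [[_ psi_min] [[s1 V_s1 psi_s1] _]] := psiP_is_min nMR neP.
apply/eqP; rewrite eq_le -{2}psi_s1 bigmin_fun_le ?andbT; last exact/VsP.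
apply: (@big_ind_In _ _ (fun f => psiP v P n <= f n)) => [||t /VsP [Pt _]].
- by apply: psi_min; exists s0 => //; case: V_s0.
- by move=> f g f_ge g_ge; rewrite /Order.min_fun le_min f_ge g_ge.
- by apply: psi_min; exists t.
Qed.

End StrictDualPair.

Theorem mainTheorem12 (F : set RR) (I : finType) (J : Type) (r s : nat)
    (mu : I -> I -> 'rV[RR]_r -> 'rV[RR]_r) (nu : J -> J -> 'rV[RR]_s -> 'rV[RR]_s)
    (v : (I -> 'rV[RR]_r) -> (J -> 'rV[RR]_s) -> RR)
    (w : (J -> 'rV[RR]_s) -> (I -> 'rV[RR]_r) -> RR)
    (P : set (I -> 'rV[RR]_r)) :
  subringR F -> polyptych F mu -> polyptych F nu ->
  strict_dual_pair F mu nu v w -> PLpolytope F mu P ->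
  (exists Vs : seq (I -> 'rV[RR]_r), forall m, Vert mu P m <-> List.In m Vs) /\
  ((exists m, P m) ->
     (forall n, isMR nu n ->
        is_min [set v u n | u in P] (psiP v P n) /\
        is_min [set v u n | u in Vert mu P] (psiP v P n)) /\
     (forall g : J, continuous (fun x : 'rV[RR]_s => psiP v P (piinv nu g x))) /\
     (exists h, inPN nu h /\ forall n, isMR nu n -> psiP v P n = h n)).
Proof.
move=> _ mu_pl nu_pl vw_dual P_pl.
have [Vs VsP] := Vert_finite mu_pl nu_pl vw_dual P_pl.
split=> [|neP]; first by exists Vs.
have [s0 V_s0] := Vert_nonempty mu_pl nu_pl vw_dual P_pl neP.
have Vs_MR t : List.In t Vs -> isMR mu t.
  by move=> /(VsP t) [Pt _]; exact: (PLpolytope_isMR P_pl Pt).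
have s0_MR : isMR mu s0 by apply: Vs_MR; apply/VsP.
pose h := \big[Order.min_fun/v s0]_(t <- Vs) v t.
have psi_h := psiP_bigmin mu_pl nu_pl vw_dual P_pl VsP V_s0.
split; first by move=> n nMR; exact: (psiP_is_min mu_pl nu_pl vw_dual P_pl nMR neP).
split; last first.
  exists h; split=> //; apply: big_ind_In => [||t /Vs_MR tMR].
  - exact/PN_pt/(dual_SpR_v vw_dual).
  - by move=> f g; apply: PN_min.
  - exact/PN_pt/(dual_SpR_v vw_dual).
move=> g; have -> : (fun x => psiP v P (piinv nu g x)) = h \o piinv nu g.
  by apply: funext => x; rewrite /= psi_h //; apply: (piinv_isMR nu_pl).
apply: (@big_ind_In _ _ (fun f => continuous (f \o piinv nu g))) => [||t /Vs_MR tMR].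
- exact (v_chart_continuous mu_pl nu_pl vw_dual (g := g) s0_MR).
- move=> f f' f_cont f'_cont x.
  exact: (@continuous_min RR _ (f \o piinv nu g) (f' \o piinv nu g) x
                          (f_cont x) (f'_cont x)).
- exact (v_chart_continuous mu_pl nu_pl vw_dual (g := g) tMR).
Qed.
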